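(* For every positive integer $r$ there exist an integer $K_r\le 3^r$, elements $a_1,\dots,a_{K_r}\in\mathbf{D}_3$, and a map $\pi:\{1,\dots,K_r\}\to\{1,\dots,r\}$ such that for every $y\in\{0,1\}^r$, $$a_1^{y_{\pi(1)}}a_2^{y_{\pi(2)}}\cdots a_{K_r}^{y_{\pi(K_r)}}\neq 1\iff y_1=y_2=\dots=y_r=1.$$ Equivalently, the linear equation $C(x_1,\dots,x_{K_r})=a_1^{x_1}\cdots a_{K_r}^{x_{K_r}}$ over $\mathbf{D}_3$ satisfies $\mathbf 1[C(y_{\pi(1)},\dots,y_{\pi(K_r)})\ne1]=\mathbf{AND}_r(y_1,\dots,y_r)$.
   Context: $\mathbf{D}_3$ denotes the dihedral group of order 6; $1$ denotes its identity and $a^0=1$, $a^1=a$. A linear equation over a group $G$ on variables $x_1,\dots,x_K\in\{0,1\}$ is a map of the form $C(x)=a_1^{x_1}\cdots a_K^{x_K}$ with $a_i\in G$, the product taken in the given order. $\mathbf{AND}_r(y)=1$ iff all $y_i=1$, and $0$ otherwise. *)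

From mathcomp Require Import all_boot all_fingroup.
Set Implicit Arguments. Unset Strict Implicit. Unset Printing Implicit Defensive.
Local Open Scope group_scope.

(* The dihedral group D_3 of order 6: the symmetry group of an (equilateral)
   triangle, acting faithfully on its 3 vertices; every permutation of the
   3 vertices is a symmetry, so D_3 is realised as {perm 'I_3}. *)
Notation D3 := {perm 'I_3}.

Definition bpow (a : D3) (x : bool) : D3 := if x then a else 1.

Definition lin_eq (K : nat) (a : 'I_K -> D3) (x : 'I_K -> bool) : D3 :=
  \prod_(i < K) bpow (a i) (x i).

Definition ANDr (r : nat) (y : 'I_r -> bool) : bool := [forall i, y i].

From mathcomp Require Import all_boot all_fingroup.
From mathcomp Require Import zify.

Set Implicit Arguments.
Unset Strict Implicit.
Unset Printing Implicit Defensive.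

(* A straight-line word of pairs (a, v), read as the ordered product of the
   a^(y v), computes z^(AND y) by Barrington's commutator trick: if a word w
   evaluates to 1 or to z according to AND(y on vs), then s w s^-1 w^-1,
   realised by guarding the two occurrences of s with the variable v, evaluates
   to 1 or to z according to AND(y on v :: vs), provided the commutator of s
   and z is z itself. Each variable doubles the length, so r variables cost
   3 * 2^(r-1) - 2 <= 3^r letters. In D_3 a reflection s and a rotation z
   satisfy s z s^-1 = z^-1 = z^2. *)

Local Open Scope group_scope.

Section CommutatorWords.

Variables (gT : finGroupType) (I : Type).

Definition word_eval (y : I -> bool) (w : seq (gT * I)) : gT :=
  \prod_(q <- w) (if y q.2 then q.1 else 1).

Definition word_inv (w : seq (gT * I)) : seq (gT * I) :=
  rev [seq (q.1^-1, q.2) | q <- w].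

Definition comm_word (s : gT) (v : I) (w : seq (gT * I)) : seq (gT * I) :=
  (s, v) :: w ++ (s^-1, v) :: word_inv w.

Variable y : I -> bool.

Lemma word_eval_cat w1 w2 :
  word_eval y (w1 ++ w2) = word_eval y w1 * word_eval y w2.
Proof. exact: big_cat. Qed.

Lemma word_eval_cons q w :
  word_eval y (q :: w) = (if y q.2 then q.1 else 1) * word_eval y w.
Proof. exact: big_cons. Qed.

Lemma word_eval_inv w : word_eval y (word_inv w) = (word_eval y w)^-1.
Proof.
elim: w => [|q w IHw]; first by rewrite /word_eval !big_nil invg1.
rewrite /word_inv /= rev_cons -cats1 word_eval_cat -/(word_inv w) IHw.
rewrite !word_eval_cons /word_eval big_nil mulg1 invMg /=.
by case: (y q.2); rewrite ?invg1.
Qed.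

Lemma word_eval_comm s v w :
  word_eval y (comm_word s v w) =
  if y v then s * word_eval y w * s^-1 * (word_eval y w)^-1 else 1.
Proof.
rewrite word_eval_cons word_eval_cat word_eval_cons word_eval_inv /=.
by case: (y v); rewrite ?mul1g ?mulgV ?mulgA.
Qed.

Lemma size_comm_word s v w : size (comm_word s v w) = (size w).*2.+2.
Proof. by rewrite /= size_cat /= size_rev size_map addnS -addnn. Qed.

Variables s z : gT.
Hypothesis commz : s * z * s^-1 * z^-1 = z.

Definition and_word (v0 : I) (vs : seq I) : seq (gT * I) :=
  foldr (comm_word s) [:: (z, v0)] vs.

Lemma word_eval_and v0 vs :
  word_eval y (and_word v0 vs) = if y v0 && all y vs then z else 1.
Proof.
elim: vs => [|v vs IHvs] /=.
  by rewrite word_eval_cons /word_eval big_nil mulg1 andbT.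
rewrite word_eval_comm IHvs andbCA.
case: (y v) (y v0 && all y vs) => [] [] //=.
by rewrite mulg1 mulgV invg1 mulg1.
Qed.

Lemma size_and_word v0 vs : (size (and_word v0 vs) <= 3 ^ (size vs).+1)%N.
Proof.
elim: vs => [|v vs IHvs] //.
rewrite (size_comm_word s v (and_word v0 vs)) [size (v :: vs)]/= expnS.
have : (3 <= 3 ^ (size vs).+1)%N by rewrite expnS leq_pmulr ?expn_gt0.
lia.
Qed.

End CommutatorWords.

Definition reflection : D3 := tperm (@Ordinal 3 0 isT) (@Ordinal 3 1 isT).
Definition rotation : D3 := reflection * tperm (@Ordinal 3 1 isT) (@Ordinal 3 2 isT).

Lemma rotation_neq1 : rotation != 1.
Proof. by apply/eqP => /permP /(_ (@Ordinal 3 0 isT)); rewrite permM !permE. Qed.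

Lemma comm_reflection_rotation :
  reflection * rotation * reflection^-1 * rotation^-1 = rotation.
Proof.
apply/permP => i; rewrite /reflection /rotation !permM !invMg !permM !tpermV.
by case: i => [[|[|[|]]]] // ?; rewrite !permE; apply/val_inj.
Qed.

Lemma lin_eq_word (I : Type) (x0 : D3 * I) (w : seq (D3 * I)) (y : I -> bool) :
  lin_eq (fun i : 'I_(size w) => (nth x0 w i).1) (fun i => y (nth x0 w i).2) =
  word_eval y w.
Proof. by rewrite /lin_eq /word_eval (big_nth x0) big_mkord. Qed.

Lemma ANDr_enum r (y : 'I_r -> bool) : ANDr y = all y (enum 'I_r).
Proof. by apply/forallP/allP => yT i //; rewrite yT ?mem_enum. Qed.

Local Close Scope group_scope.

Theorem mainTheorem11 :
  forall r : nat, 0 < r ->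
  exists (K : nat) (a : 'I_K -> D3) (pi : 'I_K -> 'I_r),
    K <= 3 ^ r /\
    forall y : 'I_r -> bool,
      (lin_eq a (fun i => y (pi i)) != 1%g) = ANDr y.
Proof.
case=> [//|n] _.
pose w := and_word reflection rotation ord0 [seq lift ord0 i | i <- enum 'I_n].
pose x0 : D3 * 'I_n.+1 := (1%g, ord0).
exists (size w), (fun i => (nth x0 w i).1), (fun i => (nth x0 w i).2).
split=> [|y].
  by rewrite (leq_trans (size_and_word _ _ _ _)) // size_map size_enum_ord.
rewrite lin_eq_word word_eval_and ?comm_reflection_rotation //.
rewrite ANDr_enum enum_ordSl /=.
by case: (_ && _); rewrite ?rotation_neq1 ?eqxx.
Qed.
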